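(* Let $V$ and $W$ be pfd $B$-persistence modules, decomposed as $V\cong\bigoplus_{\mathcal{X}}V^{\mathcal{X}}$ and $W\cong\bigoplus_{\mathcal{X}}W^{\mathcal{X}}$, with $\mathcal{X}$ ranging over $\{\mathcal{U},\mathcal{D},\mathcal{B},\mathcal{L},\mathcal{R}\}$. For every $\epsilon\ge0$ the following are equivalent: - (i) $V$ and $W$ are $\Lambda_\epsilon$-interleaved; - (ii) $V^{\mathcal{X}}$ and $W^{\mathcal{X}}$ are $\Lambda_\epsilon$-interleaved for each $\mathcal{X}\in\{\mathcal{U},\mathcal{D},\mathcal{B},\mathcal{L},\mathcal{R}\}$.
   Context: Let $k$ be a field. The bipath poset $B$ has underlying set $(\mathbb{R}\times\{1,2\})\sqcup\{-\infty,+\infty\}$. Its order is: $x\le y$ iff $x=-\infty$, or $y=+\infty$, or $x=(s,i)$, $y=(t,i)$ with the same $i$ and $s\le t$. A $B$-persistence module is a functor from $B$ (as a category) to $k$-vector spaces; it is pfd if all spaces are finite-dimensional. An interval of $B$ is a nonempty convex and connected subset (convex: $p,q\in I$, $p\le r\le q$ imply $r\in I$; connected: any two elements are joined by a finite sequence in $I$ with consecutive ones comparable). $k_I$ denotes the interval module. Every pfd $B$-module decomposes uniquely (up to isomorphism and permutation) into interval modules. The types of intervals are: - $\mathcal{U}$: intervals contained in $\mathbb{R}\times\{1\}$; - $\mathcal{D}$: intervals contained in $\mathbb{R}\times\{2\}$; - $\mathcal{B}=\{B\}$; - $\mathcal{L}$: intervals $\neq B$ containing $-\infty$; - $\mathcal{R}$: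 intervals $\neq B$ containing $+\infty$. $V^{\mathcal{X}}$ denotes the direct sum of those interval summands of $V$ whose interval lies in $\mathcal{X}$; it is well defined up to isomorphism. For $\epsilon\ge0$, $\Lambda_\epsilon\colon B\to B$ sends $(r,i)\mapsto(r+\epsilon,i)$ and fixes $\pm\infty$. Then: - $V(\epsilon)_b=V_{\Lambda_\epsilon b}$ and $V(\epsilon)(b,b')=V(\Lambda_\epsilon b,\Lambda_\epsilon b')$; for a morphism $\phi$, $\phi(\epsilon)$ has components $\phi_{\Lambda_\epsilon b}$; - $V_{0\to\epsilon}\colon V\to V(\epsilon)$ has components $V(b,\Lambda_\epsilon b)$; - $V$ and $W$ are $\Lambda_\epsilon$-interleaved if there are $\alpha\colon V\to W(\epsilon)$ and $\beta\colon W\to V(\epsilon)$ with $\beta(\epsilon)\alpha=V_{0\to2\epsilon}$ and $\alpha(\epsilon)\beta=W_{0\to2\epsilon}$. *)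

From Stdlib Require Import Reals.
From mathcomp Require Import all_boot all_algebra.

Set Implicit Arguments.
Unset Strict Implicit.
Unset Printing Implicit Defensive.

Import GRing.Theory.
Local Open Scope ring_scope.

Inductive strand := S1 | S2.

Inductive Bpt :=
  | Ninf : Bpt
  | Pinf : Bpt
  | Pt : R -> strand -> Bpt.

Definition Ble (x y : Bpt) : Prop :=
  match x, y with
  | Ninf, _ => True
  | _, Pinf => True
  | Pt s i, Pt t j => i = j /\ Rle s t
  | _, _ => False
  end.

Definition Bcomparable (x y : Bpt) : Prop := Ble x y \/ Ble y x.

Definition is_interval (I : Bpt -> Prop) : Prop :=
  (exists p, I p) /\
  (forall p q r, I p -> I q -> Ble p r -> Ble r q -> I r) /\
  (forall p q, I p -> I q ->
     exists (n : nat) (f : nat -> Bpt),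
       f 0%N = p /\ f n = q /\
       (forall m, (m <= n)%N -> I (f m)) /\
       (forall m, (m < n)%N -> Bcomparable (f m) (f m.+1))).

Inductive itype := TU | TD | TB | TL | TR.

(* I is of type X (I is assumed to be an interval) *)
Definition of_type (X : itype) (I : Bpt -> Prop) : Prop :=
  match X with
  | TU => forall x, I x -> exists r, x = Pt r S1
  | TD => forall x, I x -> exists r, x = Pt r S2
  | TB => forall x, I x
  | TL => I Ninf /\ ~ (forall x, I x)
  | TR => I Pinf /\ ~ (forall x, I x)
  end.

(* ---------- pfd B-persistence modules ----------
   A pfd module is given by finite dimensions and structure maps (matrices,
   row-vector convention: v |-> v *m pmap b b'), functorial on b <= b'.
   Values of pmap on incomparable pairs are irrelevant. *)
Record pmod (k : fieldType) := Pmod {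
  pdim : Bpt -> nat;
  pmap : forall b b', 'M[k]_(pdim b, pdim b');
  pmap_id : forall b, pmap b b = 1%:M;
  pmap_comp : forall b b' b'', Ble b b' -> Ble b' b'' ->
      pmap b b' *m pmap b' b'' = pmap b b''
}.

Definition is_hom (k : fieldType) (V W : pmod k)
    (f : forall b, 'M[k]_(pdim V b, pdim W b)) : Prop :=
  forall b b', Ble b b' -> pmap V b b' *m f b' = f b *m pmap W b b'.

Definition Lam (e : R) (b : Bpt) : Bpt :=
  match b with
  | Pt r i => Pt (Rplus r e) i
  | x => x
  end.

Lemma Lam_mono e b b' : Ble b b' -> Ble (Lam e b) (Lam e b').
Proof.
case: b => [||r i]; case: b' => [||s j] //=.
move=> [-> H]; split => //; exact: Rplus_le_compat_r.
Qed.

Definition shift (k : fieldType) (V : pmod k) (e : R) : pmod k :=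
  @Pmod k (fun b => pdim V (Lam e b))
    (fun b b' => pmap V (Lam e b) (Lam e b'))
    (fun b => pmap_id V (Lam e b))
    (fun b b' b'' H1 H2 => pmap_comp V (Lam_mono e H1) (Lam_mono e H2)).

(* Lambda_eps-interleaving: alpha : V -> W(eps), beta : W -> V(eps),
   beta(eps) alpha = V_{0 -> 2eps}, alpha(eps) beta = W_{0 -> 2eps}.
   (Lam e (Lam e b) is Lambda_{2 eps} b.) *)
Definition interleaved (k : fieldType) (V W : pmod k) (e : R) : Prop :=
  exists (alpha : forall b, 'M[k]_(pdim V b, pdim W (Lam e b)))
         (beta : forall b, 'M[k]_(pdim W b, pdim V (Lam e b))),
    is_hom (W := shift W e) alpha /\
    is_hom (W := shift V e) beta /\
    (forall b, alpha b *m beta (Lam e b) = pmap V b (Lam e (Lam e b))) /\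
    (forall b, beta b *m alpha (Lam e b) = pmap W b (Lam e (Lam e b))).

(* ---------- Interval decompositions ----------
   has_barcode V J I : V is isomorphic to the direct sum of the interval
   modules k_{I j}, j : J.  Unfolded: there are bases of each V_b (rows of the
   invertible matrix Q b), indexed through idx b by exactly the j with
   b \in I j, such that for b <= b' the structure map sends the basis vector
   of index j at b to the basis vector of index j at b' if b' \in I j, and to
   0 otherwise (i.e. it is the structure map of k_{I j}). *)
Definition has_barcode (k : fieldType) (V : pmod k) (J : Type)
    (I : J -> Bpt -> Prop) : Prop :=
  (forall j, is_interval (I j)) /\
  exists (idx : forall b, 'I_(pdim V b) -> J)
         (Q : forall b, 'M[k]_(pdim V b)),
    (forall b, Q b \in unitmx) /\
    (forall b, injective (idx b)) /\
    (forall b j, I j b <-> exists i, idx b i = j) /\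
    (forall b b' i i', Ble b b' ->
       (idx b i = idx b' i' -> (Q b *m pmap V b b' *m invmx (Q b')) i i' = 1) /\
       (idx b i <> idx b' i' -> (Q b *m pmap V b b' *m invmx (Q b')) i i' = 0)).

(* VX X is V^X for every type X: for some interval decomposition (I j)_{j:J}
   of V, VX X is isomorphic to the direct sum of those k_{I j} with I j of
   type X.  (Well defined up to isomorphism by uniqueness of decompositions.) *)
Definition type_parts (k : fieldType) (V : pmod k) (VX : itype -> pmod k) : Prop :=
  exists (J : Type) (I : J -> Bpt -> Prop),
    has_barcode V I /\
    forall X, has_barcode (VX X) (fun j : {j : J | of_type X (I j)} => I (proj1_sig j)).

(* In barcode bases, a nonzero coefficient of a morphism k_I -> k_J forces
   I to reach at least as far up as J, and J at least as far down as I.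
   Along a round trip V^X -> W^Y(eps) -> V^X(2 eps) through nonzero
   coefficients, the intervals met must therefore agree on whether they
   contain -oo and +oo, and on their strand; so such round trips vanish when
   X <> Y.  Now V and W are biproducts of their type parts: an interleaving
   of V and W restricts to the parts, because the cross terms of the
   compositions are such round trips, and interleavings of the parts sum up
   to one of V and W. *)

From HB Require Import structures.
From Stdlib Require Import Reals Lra Classical ClassicalEpsilon ChoiceFacts ProofIrrelevance.
From mathcomp Require Import all_boot all_algebra.

Unset Printing Implicit Defensive.
Import GRing.Theory.
Local Open Scope ring_scope.

Definition itype_code (X : itype) : nat :=
  match X with TU => 0 | TD => 1 | TB => 2 | TL => 3 | TR => 4 end.
Definition itype_decode (n : nat) : itype :=
  match n with 0 => TU | 1 => TD | 2 => TB | 3 => TL | _ => TR end.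
Lemma itype_codeK : cancel itype_code itype_decode. Proof. by case. Qed.
HB.instance Definition _ := Countable.copy itype (can_type itype_codeK).
Lemma itype_enumP : Finite.axiom [:: TU; TD; TB; TL; TR]. Proof. by case. Qed.
HB.instance Definition _ := isFinite.Build itype itype_enumP.

Lemma Ble_Pinf x : Ble x Pinf. Proof. by case: x. Qed.

Lemma Ble_Lam2 {e} b : Rle 0 e -> Ble b (Lam e (Lam e b)).
Proof. by move=> he; case: b => [||r s] //=; split => //; lra. Qed.

Definition has_Ninf (X : itype) : bool := if X is (TB | TL) then true else false.
Definition has_Pinf (X : itype) : bool := if X is (TB | TR) then true else false.

Definition strand_of (x : Bpt) : option strand := if x is Pt _ s then Some s else None.

Lemma interval_full {I} : is_interval I -> I Ninf -> I Pinf -> forall x, I x.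
Proof. by case=> _ [conv _] hN hP x; apply: (conv Ninf Pinf) => //; apply: Ble_Pinf. Qed.

Lemma of_type_Ninf {X I} : is_interval I -> of_type X I -> I Ninf <-> has_Ninf X.
Proof.
move=> HI; case: X => /= [T|T|//|[]//|[hP full]]; try by split=> // /T [].
by split=> // hN; case: full; apply: interval_full.
Qed.

Lemma of_type_Pinf {X I} : is_interval I -> of_type X I -> I Pinf <-> has_Pinf X.
Proof.
move=> HI; case: X => /= [T|T|//|[hN full]|[]//]; try by split=> // /T [].
by split=> // hP; case: full; apply: interval_full.
Qed.

Lemma itype_eq_of_ends {X Y I J b c} :
  of_type X I -> of_type Y J -> I b -> J c -> strand_of b = strand_of c ->
  has_Ninf X = has_Ninf Y -> has_Pinf X = has_Pinf Y -> X = Y.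
Proof.
by case: X; case: Y => //= TX TY /TX [r ->] /TY [s ->].
Qed.

Lemma iff_eqb {P : Prop} {a b : bool} : (P <-> a) -> (P <-> b) -> a = b.
Proof. by move=> ha hb; apply/idP/idP => [/ha/hb|/hb/ha]. Qed.

Lemma of_type_unique {X Y I} : is_interval I -> of_type X I -> of_type Y I -> X = Y.
Proof.
move=> HI TX TY; have [[p Ip] _] := HI.
apply: (itype_eq_of_ends TX TY Ip Ip) => //.
- exact: iff_eqb (of_type_Ninf HI TX) (of_type_Ninf HI TY).
- exact: iff_eqb (of_type_Pinf HI TX) (of_type_Pinf HI TY).
Qed.

Lemma Bcomparable_strand {r s r' s'} : Bcomparable (Pt r s) (Pt r' s') -> s = s'.
Proof. by case=> [][]. Qed.

Lemma interval_strand {I p q} : is_interval I -> ~ I Ninf -> ~ I Pinf ->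
  I p -> I q -> exists r r' s, p = Pt r s /\ q = Pt r' s.
Proof.
move=> [_ [_ conn]] hN hP Ip Iq.
have Pt_of x : I x -> exists r s, x = Pt r s.
  by case: x => [||r s] //; exists r, s.
have [n [f [f0 [fn [fI fC]]]]] := conn p q Ip Iq.
have [r [s ep]] := Pt_of p Ip.
suff on_s m : (m <= n)%N -> exists r', f m = Pt r' s.
  by have [r' er'] := on_s n (leqnn n); exists r, r', s; rewrite -fn.
elim: m => [|m IH] hm; first by exists r; rewrite f0.
have [t et] := IH (ltnW hm); have [t' [s' et']] := Pt_of _ (fI _ hm).
by exists t'; move: (fC m hm); rewrite et et' => /Bcomparable_strand ->.
Qed.

Lemma of_type_exists {I} : is_interval I -> exists X, of_type X I.
Proof.
move=> HI; have [full|not_full] := classic (forall x, I x); first by exists TB.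
have [hN|hN] := classic (I Ninf); first by exists TL.
have [hP|hP] := classic (I Pinf); first by exists TR.
have [[p Ip] _] := HI.
have [r [_ [s [ep _]]]] := interval_strand HI hN hP Ip Ip.
have on_s x : I x -> exists r', x = Pt r' s.
  move=> Ix; have [rx [rp [s' [ex ep']]]] := interval_strand HI hN hP Ix Ip.
  by exists rx; rewrite ex; move: ep'; rewrite ep => -[_ ->].
by case: s on_s {ep} => on_s; [exists TU | exists TD].
Qed.

Lemma roundtrip_type_eq {X Y I1 J I2 b e} :
  is_interval I1 -> is_interval J -> is_interval I2 ->
  of_type X I1 -> of_type Y J -> of_type X I2 -> I1 b -> J (Lam e b) ->
  (I1 Ninf -> J Ninf) -> (J Ninf -> I2 Ninf) ->
  (I2 Pinf -> J Pinf) -> (J Pinf -> I1 Pinf) -> X = Y.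
Proof.
move=> H1 HJ H2 T1 TJ T2 I1b JLb N1J NJ2 P2J PJ1.
apply: (itype_eq_of_ends T1 TJ I1b JLb); first by case: b {I1b JLb}.
- have N1 := of_type_Ninf H1 T1; have NJ := of_type_Ninf HJ TJ.
  have N2 := of_type_Ninf H2 T2.
  by apply/idP/idP => [/N1/N1J/NJ | /NJ/NJ2/N2].
- have P1 := of_type_Pinf H1 T1; have PJ := of_type_Pinf HJ TJ.
  have P2 := of_type_Pinf H2 T2.
  by apply/idP/idP => [/P2/P2J/PJ | /PJ/PJ1/P1].
Qed.

Section RelationMatrices.
Context {k : fieldType}.

Definition iverson (P : Prop) : k := if excluded_middle_informative P then 1 else 0.

Lemma iversonT {P : Prop} : P -> iverson P = 1.
Proof. by rewrite /iverson; case: excluded_middle_informative. Qed.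

Lemma iversonF {P : Prop} : ~ P -> iverson P = 0.
Proof. by rewrite /iverson; case: excluded_middle_informative. Qed.

Lemma iversonM (P Q : Prop) : iverson P * iverson Q = iverson (P /\ Q).
Proof.
have [hP|hP] := classic P; last by rewrite (iversonF hP) (@iversonF (P /\ Q)) ?mul0r // => -[].
have [hQ|hQ] := classic Q; last by rewrite (iversonF hQ) (@iversonF (P /\ Q)) ?mulr0 // => -[].
by rewrite !iversonT ?mulr1.
Qed.

Lemma sum_iverson {T : finType} (P : T -> Prop) :
  (forall x y, P x -> P y -> x = y) -> \sum_x iverson (P x) = iverson (exists x, P x).
Proof.
move=> uniqP; have [[x Px]|noP] := classic (exists x, P x); last first.
  by rewrite iversonF // big1 // => x _; rewrite iversonF // => Px; apply: noP; exists x.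
rewrite iversonT; last by exists x.
rewrite (bigD1 x) //= iversonT // big1 ?addr0 // => y /eqP neq_yx.
by rewrite iversonF // => Py; apply: neq_yx; apply: uniqP Py Px.
Qed.

Definition relmx {m n} (R : 'I_m -> 'I_n -> Prop) : 'M[k]_(m, n) :=
  \matrix_(i, j) iverson (R i j).

Lemma eq_relmx {m n} (R R' : 'I_m -> 'I_n -> Prop) :
  (forall i j, R i j <-> R' i j) -> relmx R = relmx R'.
Proof.
move=> eqR; apply/matrixP => i j; rewrite !mxE.
have [h|h] := classic (R i j); first by rewrite !iversonT //; apply/eqR.
by rewrite !iversonF // => /eqR.
Qed.

Lemma relmx_eq {n} : relmx (fun i j : 'I_n => i = j) = 1%:M.
Proof.
apply/matrixP => i j; rewrite !mxE.
case: eqVneq => [->|neq]; first by rewrite iversonT.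
by rewrite iversonF // => eq_ij; rewrite eq_ij eqxx in neq.
Qed.

Lemma relmx_False {m n} : relmx (fun (_ : 'I_m) (_ : 'I_n) => False) = 0.
Proof. by apply/matrixP => i j; rewrite !mxE iversonF. Qed.

Lemma tr_relmx {m n} (R : 'I_m -> 'I_n -> Prop) :
  (relmx R)^T = relmx (fun j i => R i j).
Proof. by apply/matrixP => i j; rewrite !mxE. Qed.

Lemma mul_relmx {m n p} (R1 : 'I_m -> 'I_n -> Prop) (R2 : 'I_n -> 'I_p -> Prop) :
  (forall i l j j', R1 i j -> R2 j l -> R1 i j' -> R2 j' l -> j = j') ->
  relmx R1 *m relmx R2 = relmx (fun i l => exists j, R1 i j /\ R2 j l).
Proof.
move=> uniq12; apply/matrixP => i l; rewrite !mxE -sum_iverson.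
  by apply: eq_bigr => j _; rewrite !mxE iversonM.
by move=> j j' [h1 h2] [h1' h2']; apply: uniq12 h1 h2 h1' h2'.
Qed.

Lemma sum_relmx {T : finType} {m n} (R : T -> 'I_m -> 'I_n -> Prop) :
  (forall i j x y, R x i j -> R y i j -> x = y) ->
  \sum_x relmx (R x) = relmx (fun i j => exists x, R x i j).
Proof.
move=> uniqR; apply/matrixP => i j; rewrite summxE mxE -sum_iverson.
  by apply: eq_bigr => x _; rewrite mxE.
exact: uniqR.
Qed.

Lemma relmx_mul_entry {m n p} (R : 'I_m -> 'I_n -> Prop) (F : 'M[k]_(n, p)) {i l j0} :
  R i j0 -> (forall j, R i j -> j = j0) -> (relmx R *m F) i l = F j0 l.
Proof.
move=> Rij0 uniqR; rewrite mxE (bigD1 j0) //= mxE iversonT // mul1r big1 ?addr0 //.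
by move=> j /eqP neq; rewrite mxE iversonF ?mul0r // => /uniqR.
Qed.

Lemma relmx_mul_entry0 {m n p} (R : 'I_m -> 'I_n -> Prop) (F : 'M[k]_(n, p)) {i l} :
  (forall j, ~ R i j) -> (relmx R *m F) i l = 0.
Proof. by move=> noR; rewrite mxE big1 // => j _; rewrite mxE iversonF ?mul0r. Qed.

Lemma mul_relmx_entry {m n p} (R : 'I_n -> 'I_p -> Prop) (F : 'M[k]_(m, n)) {i l j0} :
  R j0 l -> (forall j, R j l -> j = j0) -> (F *m relmx R) i l = F i j0.
Proof.
move=> Rj0l uniqR; rewrite mxE (bigD1 j0) //= mxE iversonT // mulr1 big1 ?addr0 //.
by move=> j /eqP neq; rewrite mxE iversonF ?mulr0 // => /uniqR.
Qed.

Lemma mul_relmx_entry0 {m n p} (R : 'I_n -> 'I_p -> Prop) (F : 'M[k]_(m, n)) {i l} :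
  (forall j, ~ R j l) -> (F *m relmx R) i l = 0.
Proof. by move=> noR; rewrite mxE big1 // => j _; rewrite mxE iversonF ?mulr0. Qed.

Lemma mulmx_conj_inj {m n} {P : 'M[k]_m} {Q : 'M[k]_n} :
  P \in unitmx -> Q \in unitmx -> injective (fun M : 'M[k]_(m, n) => P *m M *m invmx Q).
Proof. by move=> uP uQ M N /(can_inj (mulmxKV uQ)) /(can_inj (mulKmx uP)). Qed.

End RelationMatrices.

Definition is_barcode_basis {k : fieldType} (V : pmod k) {J : Type}
    (I : J -> Bpt -> Prop) (idx : forall b, 'I_(pdim V b) -> J)
    (Q : forall b, 'M[k]_(pdim V b)) : Prop :=
  (forall b, Q b \in unitmx) /\
  (forall b, injective (idx b)) /\
  (forall b j, I j b <-> exists i, idx b i = j) /\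
  (forall b b' i i', Ble b b' ->
     (idx b i = idx b' i' -> (Q b *m pmap V b b' *m invmx (Q b')) i i' = 1) /\
     (idx b i <> idx b' i' -> (Q b *m pmap V b b' *m invmx (Q b')) i i' = 0)).

Section BarcodeBasis.
Context {k : fieldType} {V : pmod k} {J : Type} {I : J -> Bpt -> Prop}.
Context {idx : forall b, 'I_(pdim V b) -> J} {Q : forall b, 'M[k]_(pdim V b)}.
Hypothesis bV : is_barcode_basis V I idx Q.

Lemma barcode_unitmx b : Q b \in unitmx.
Proof. by case: bV. Qed.

Lemma barcode_idx_inj b : injective (idx b).
Proof. by case: bV => _ []. Qed.

Lemma barcode_idx_mem b i : I (idx b i) b.
Proof. by case: bV => _ [_ [memI _]]; apply/memI; exists i. Qed.

Lemma barcode_idxP b j : I j b -> exists i, idx b i = j.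
Proof. by case: bV => _ [_ [memI _]] /memI. Qed.

Definition barcode_mx b b' : 'M[k]_(pdim V b, pdim V b') :=
  relmx (fun i i' => idx b i = idx b' i').

Lemma pmap_in_barcode b b' : Ble b b' ->
  Q b *m pmap V b b' *m invmx (Q b') = barcode_mx b b'.
Proof.
case: bV => _ [_ [_ entries]] hb; apply/matrixP => i i'; rewrite [in RHS]mxE.
have [eq_idx|neq_idx] := classic (idx b i = idx b' i').
  by rewrite iversonT //; apply: (entries b b' i i' hb).1.
by rewrite iversonF //; apply: (entries b b' i i' hb).2.
Qed.

End BarcodeBasis.

Arguments barcode_mx {k V J} idx b b'.
Arguments barcode_idxP {k V J I idx Q} bV {b j}.
Arguments pmap_in_barcode {k V J I idx Q} bV {b b'}.

Lemma barcode_basis_shift {k : fieldType} {V : pmod k} {J : Type}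
    {I : J -> Bpt -> Prop} {idx Q} e :
  is_barcode_basis V I idx Q ->
  is_barcode_basis (shift V e) (fun j b => I j (Lam e b))
    (fun b => idx (Lam e b)) (fun b => Q (Lam e b)).
Proof.
case=> uQ [inj [memI entries]]; split=> [b|]; first exact: uQ.
split=> [b|]; first exact: inj.
split=> [b j|b b' i i' hb]; first exact: memI.
exact: entries _ _ i i' (Lam_mono e hb).
Qed.

Section HomsInBarcodeBases.
Context {k : fieldType} {A B : pmod k} {JA JB : Type}.
Context {IA : JA -> Bpt -> Prop} {IB : JB -> Bpt -> Prop}.
Context {idxA : forall b, 'I_(pdim A b) -> JA} {QA : forall b, 'M[k]_(pdim A b)}.
Context {idxB : forall b, 'I_(pdim B b) -> JB} {QB : forall b, 'M[k]_(pdim B b)}.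
Hypotheses (bA : is_barcode_basis A IA idxA QA) (bB : is_barcode_basis B IB idxB QB).

Definition in_bases (F : forall b, 'M[k]_(pdim A b, pdim B b)) b :=
  QA b *m F b *m invmx (QB b).

Definition of_bases (M : forall b, 'M[k]_(pdim A b, pdim B b)) b :=
  invmx (QA b) *m M b *m QB b.

Lemma in_of_bases M b : in_bases (of_bases M) b = M b.
Proof.
rewrite /in_bases /of_bases !mulmxA mulmxK ?(barcode_unitmx bB) //.
by rewrite mulmxV ?(barcode_unitmx bA) // mul1mx.
Qed.

Lemma is_hom_in_bases F : is_hom F <->
  forall b b', Ble b b' ->
    barcode_mx idxA b b' *m in_bases F b' = in_bases F b *m barcode_mx idxB b b'.
Proof.
have uA := barcode_unitmx bA; have uB := barcode_unitmx bB.
have conjL b b' : Ble b b' ->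
    QA b *m (pmap A b b' *m F b') *m invmx (QB b') =
    barcode_mx idxA b b' *m in_bases F b'.
  by move=> hb; rewrite -(pmap_in_barcode bA hb) /in_bases !mulmxA mulmxKV.
have conjR b b' : Ble b b' ->
    QA b *m (F b *m pmap B b b') *m invmx (QB b') =
    in_bases F b *m barcode_mx idxB b b'.
  by move=> hb; rewrite -(pmap_in_barcode bB hb) /in_bases !mulmxA mulmxKV.
split=> homF b b' hb; first by rewrite -conjL // -conjR // homF.
by apply: (mulmx_conj_inj (uA b) (uB b')); rewrite conjL // conjR // homF.
Qed.

Lemma in_bases_support_up {F b i m} : is_hom F -> in_bases F b i m != 0 ->
  forall b', Ble b b' -> IB (idxB b m) b' -> IA (idxA b i) b'.
Proof.
move=> /is_hom_in_bases homF nz b' hb IBb'; apply: NNPP => notIA.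
have [m' em'] := barcode_idxP bB IBb'.
have lhs : (barcode_mx idxA b b' *m in_bases F b') i m' = 0.
  apply: relmx_mul_entry0 => i' eq_i'; apply: notIA; rewrite eq_i'.
  exact: barcode_idx_mem bA b' i'.
have rhs : (in_bases F b *m barcode_mx idxB b b') i m' = in_bases F b i m.
  apply: mul_relmx_entry => [|j ej]; first by rewrite em'.
  by apply: (barcode_idx_inj bB); rewrite ej em'.
by move: nz; rewrite -rhs -homF // lhs eqxx.
Qed.

Lemma in_bases_support_down {F b i m} : is_hom F -> in_bases F b i m != 0 ->
  forall b'', Ble b'' b -> IA (idxA b i) b'' -> IB (idxB b m) b''.
Proof.
move=> /is_hom_in_bases homF nz b'' hb IAb''; apply: NNPP => notIB.
have [i0 ei0] := barcode_idxP bA IAb''.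
have lhs : (barcode_mx idxA b'' b *m in_bases F b) i0 m = in_bases F b i m.
  apply: relmx_mul_entry => [|j ej]; first by rewrite ei0.
  by apply: (barcode_idx_inj bA); rewrite -ej ei0.
have rhs : (in_bases F b'' *m barcode_mx idxB b'' b) i0 m = 0.
  apply: mul_relmx_entry0 => m'' eq_m''; apply: notIB; rewrite -eq_m''.
  exact: barcode_idx_mem bB b'' m''.
by move: nz; rewrite -lhs homF // rhs eqxx.
Qed.

End HomsInBarcodeBases.

Arguments in_bases {k A B} QA QB F b.
Arguments of_bases {k A B} QA QB M b.

Definition pure_of_type {k : fieldType} (X : itype) (A : pmod k) : Prop :=
  exists (J : Type) (I : J -> Bpt -> Prop),
    has_barcode A I /\ forall j, of_type X (I j).

Definition roundtrips_vanish {k : fieldType} (A B : pmod k) (e : R) : Prop :=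
  forall (f : forall b, 'M[k]_(pdim A b, pdim B (Lam e b)))
         (g : forall b, 'M[k]_(pdim B b, pdim A (Lam e b))),
    is_hom (W := shift B e) f -> is_hom (W := shift A e) g ->
    forall b, f b *m g (Lam e b) = 0.

Lemma roundtrips_vanish_of_types {k : fieldType} {X Y} {A B : pmod k} e :
  X != Y -> pure_of_type X A -> pure_of_type Y B -> roundtrips_vanish A B e.
Proof.
move=> neqXY [JA [IA [[intA [idxA [QA bA]]] TA]]] [JB [IB [[intB [idxB [QB bB]]] TB]]].
move=> f g homf homg b.
have bA' := barcode_basis_shift e bA; have bB' := barcode_basis_shift e bB.
pose Fm := in_bases (B := shift B e) QA (fun b => QB (Lam e b)) f.
pose Gm := in_bases (B := shift A e) QB (fun b => QA (Lam e b)) g.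
have FGm0 : Fm b *m Gm (Lam e b) = 0.
  apply/matrixP => i i2; rewrite !mxE big1 // => m _.
  have [->|Fnz] := eqVneq (Fm b i m) 0; first by rewrite mul0r.
  have [->|Gnz] := eqVneq (Gm (Lam e b) m i2) 0; first by rewrite mulr0.
  case/eqP: neqXY.
  apply: (@roundtrip_type_eq _ _ (IA (idxA b i)) (IB (idxB (Lam e b) m))
            (IA (idxA (Lam e (Lam e b)) i2)) b e (intA _) (intB _) (intA _)
            (TA _) (TB _) (TA _) (barcode_idx_mem bA b i)
            (barcode_idx_mem bB (Lam e b) m)).
  - by apply: (in_bases_support_down bA bB' homf Fnz Ninf I).
  - by apply: (in_bases_support_down bB bA' homg Gnz Ninf I).
  - by apply: (in_bases_support_up bB bA' homg Gnz Pinf (Ble_Pinf _)).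
  - by apply: (in_bases_support_up bA bB' homf Fnz Pinf (Ble_Pinf _)).
have uA := barcode_unitmx bA.
apply: (mulmx_conj_inj (uA b) (uA (Lam e (Lam e b)))).
by rewrite mulmx0 mul0mx -FGm0 /Fm /Gm /in_bases !mulmxA mulmxKV ?(barcode_unitmx bB).
Qed.

Section Homs.
Context {k : fieldType}.

Lemma is_hom_mul {A B C : pmod k} (f : forall b, 'M[k]_(pdim A b, pdim B b))
    (g : forall b, 'M[k]_(pdim B b, pdim C b)) :
  is_hom f -> is_hom g -> is_hom (fun b => f b *m g b).
Proof. by move=> hf hg b b' hb; rewrite mulmxA hf // -!mulmxA hg. Qed.

Lemma is_hom_shift {A B : pmod k} e (f : forall b, 'M[k]_(pdim A b, pdim B b)) :
  is_hom f -> is_hom (V := shift A e) (W := shift B e) (fun b => f (Lam e b)).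
Proof. by move=> hf b b' hb; apply: hf; apply: Lam_mono. Qed.

Lemma is_hom_sum {A B : pmod k} {T : finType}
    (f : T -> forall b, 'M[k]_(pdim A b, pdim B b)) :
  (forall t, is_hom (f t)) -> is_hom (fun b => \sum_t f t b).
Proof.
by move=> hf b b' hb; rewrite mulmx_sumr mulmx_suml; apply: eq_bigr => t _; apply: hf.
Qed.

End Homs.

Definition is_interleaving {k : fieldType} (A B : pmod k) (e : R)
    (alpha : forall b, 'M[k]_(pdim A b, pdim B (Lam e b)))
    (beta : forall b, 'M[k]_(pdim B b, pdim A (Lam e b))) : Prop :=
  is_hom (W := shift B e) alpha /\ is_hom (W := shift A e) beta /\
  (forall b, alpha b *m beta (Lam e b) = pmap A b (Lam e (Lam e b))) /\
  (forall b, beta b *m alpha (Lam e b) = pmap B b (Lam e (Lam e b))).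

Record biproduct {k : fieldType} {T : finType} (V : pmod k) (VX : T -> pmod k) := Biproduct {
  bp_inj : forall X b, 'M[k]_(pdim (VX X) b, pdim V b);
  bp_proj : forall X b, 'M[k]_(pdim V b, pdim (VX X) b);
  bp_inj_hom : forall X, is_hom (bp_inj X);
  bp_proj_hom : forall X, is_hom (bp_proj X);
  bp_injK : forall X b, bp_inj X b *m bp_proj X b = 1%:M;
  bp_inj_proj0 : forall X Y b, X != Y -> bp_inj X b *m bp_proj Y b = 0;
  bp_sum : forall b, \sum_X bp_proj X b *m bp_inj X b = 1%:M
}.

Arguments bp_inj {k T V VX}.
Arguments bp_proj {k T V VX}.
Arguments bp_inj_hom {k T V VX}.
Arguments bp_proj_hom {k T V VX}.
Arguments bp_injK {k T V VX}.
Arguments bp_inj_proj0 {k T V VX}.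
Arguments bp_sum {k T V VX}.

Section BiproductMaps.
Context {k : fieldType} {T : finType} {V : pmod k} {VX : T -> pmod k}.
Variable bp : biproduct V VX.

Lemma bp_pmap_component X b b' : Ble b b' ->
  bp_inj bp X b *m pmap V b b' *m bp_proj bp X b' = pmap (VX X) b b'.
Proof. by move=> hb; rewrite -(bp_inj_hom bp X b b' hb) -mulmxA bp_injK mulmx1. Qed.

Lemma bp_pmap_sum b b' : Ble b b' ->
  \sum_X bp_proj bp X b *m pmap (VX X) b b' *m bp_inj bp X b' = pmap V b b'.
Proof.
move=> hb; rewrite (eq_bigr (fun X => bp_proj bp X b *m bp_inj bp X b *m pmap V b b')).
  by rewrite -mulmx_suml bp_sum mul1mx.
by move=> X _; rewrite -mulmxA bp_inj_hom // mulmxA.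
Qed.

End BiproductMaps.

Section Components.
Context {k : fieldType} {T : finType} {A B : pmod k} {AX BX : T -> pmod k}.
Variables (bpA : biproduct A AX) (bpB : biproduct B BX) (e : R).

Definition component X Y (f : forall b, 'M[k]_(pdim A b, pdim B (Lam e b))) b :
    'M[k]_(pdim (AX X) b, pdim (BX Y) (Lam e b)) :=
  bp_inj bpA X b *m f b *m bp_proj bpB Y (Lam e b).

Definition assemble (f : forall X b, 'M[k]_(pdim (AX X) b, pdim (BX X) (Lam e b))) b :
    'M[k]_(pdim A b, pdim B (Lam e b)) :=
  \sum_X bp_proj bpA X b *m f X b *m bp_inj bpB X (Lam e b).

Lemma component_hom X Y f : is_hom (W := shift B e) f ->
  is_hom (W := shift (BX Y) e) (component X Y f).
Proof.
move=> hf; apply: (is_hom_mul (B := shift B e)).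
  exact: is_hom_mul (bp_inj_hom bpA X) hf.
exact: is_hom_shift (bp_proj_hom bpB Y).
Qed.

Lemma assemble_hom f : (forall X, is_hom (W := shift (BX X) e) (f X)) ->
  is_hom (W := shift B e) (assemble f).
Proof.
move=> hf; apply: is_hom_sum => X; apply: (is_hom_mul (B := shift (BX X) e)).
  exact: is_hom_mul (bp_proj_hom bpA X) (hf X).
exact: is_hom_shift (bp_inj_hom bpB X).
Qed.

End Components.

Section ComponentProducts.
Context {k : fieldType} {T : finType} {A B : pmod k} {AX BX : T -> pmod k}.
Variables (bpA : biproduct A AX) (bpB : biproduct B BX) (e : R).

Lemma component_mul_sum X f g b :
  bp_inj bpA X b *m (f b *m g (Lam e b)) *m bp_proj bpA X (Lam e (Lam e b)) =
  \sum_Y component bpA bpB e X Y f b *m component bpB bpA e Y X g (Lam e b).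
Proof.
rewrite -[f b in LHS]mulmx1 -(bp_sum bpB (Lam e b)) mulmx_sumr !mulmx_suml.
by rewrite mulmx_sumr mulmx_suml; apply: eq_bigr => Y _; rewrite /component !mulmxA.
Qed.

Lemma component_roundtrip X f g b :
  is_hom (W := shift B e) f -> is_hom (W := shift A e) g ->
  (forall Y, Y != X -> roundtrips_vanish (AX X) (BX Y) e) ->
  component bpA bpB e X X f b *m component bpB bpA e X X g (Lam e b) =
  bp_inj bpA X b *m (f b *m g (Lam e b)) *m bp_proj bpA X (Lam e (Lam e b)).
Proof.
move=> hf hg vanish; rewrite component_mul_sum (bigD1 X) //= big1 ?addr0 // => Y neqYX.
by apply: vanish; [exact: neqYX | exact: component_hom | exact: component_hom].
Qed.

Lemma assemble_mul f g b :
  assemble bpA bpB e f b *m assemble bpB bpA e g (Lam e b) =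
  \sum_X bp_proj bpA X b *m (f X b *m g X (Lam e b)) *m
         bp_inj bpA X (Lam e (Lam e b)).
Proof.
rewrite mulmx_suml; apply: eq_bigr => X _.
rewrite mulmx_sumr (bigD1 X) //= big1 ?addr0 => [|Y neqYX].
  by rewrite !mulmxA -[_ *m bp_inj bpB X _ *m _]mulmxA bp_injK mulmx1.
by rewrite !mulmxA -[_ *m bp_inj bpB X _ *m _]mulmxA bp_inj_proj0 1?eq_sym // mulmx0 !mul0mx.
Qed.

End ComponentProducts.

Section ComponentInterleavings.
Context {k : fieldType} {T : finType} {A B : pmod k} {AX BX : T -> pmod k}.
Variables (bpA : biproduct A AX) (bpB : biproduct B BX) (e : R).
Hypothesis e_ge0 : Rle 0 e.

Lemma is_interleaving_components alpha beta :
  (forall X Y, X != Y -> roundtrips_vanish (AX X) (BX Y) e) ->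
  (forall X Y, X != Y -> roundtrips_vanish (BX X) (AX Y) e) ->
  is_interleaving A B e alpha beta ->
  forall X, is_interleaving (AX X) (BX X) e
    (component bpA bpB e X X alpha) (component bpB bpA e X X beta).
Proof.
move=> vanishAB vanishBA [ha [hb [hab hba]]] X; split; [|split; [|split]] => [||b|b].
- exact: component_hom.
- exact: component_hom.
- rewrite (component_roundtrip bpA bpB) // => [|Y]; last by rewrite eq_sym => /vanishAB.
  by rewrite hab (bp_pmap_component bpA) //; apply: Ble_Lam2.
- rewrite (component_roundtrip bpB bpA) // => [|Y]; last by rewrite eq_sym => /vanishBA.
  by rewrite hba (bp_pmap_component bpB) //; apply: Ble_Lam2.
Qed.

Lemma is_interleaving_assemble alpha beta :
  (forall X, is_interleaving (AX X) (BX X) e (alpha X) (beta X)) ->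
  is_interleaving A B e (assemble bpA bpB e alpha) (assemble bpB bpA e beta).
Proof.
move=> ileave; split; [|split; [|split]] => [||b|b].
- by apply: assemble_hom => X; case: (ileave X).
- by apply: assemble_hom => X; case: (ileave X) => _ [].
- rewrite (assemble_mul bpA bpB) -(bp_pmap_sum bpA); last exact: Ble_Lam2.
  by apply: eq_bigr => X _; case: (ileave X) => _ [_ [-> _]].
- rewrite (assemble_mul bpB bpA) -(bp_pmap_sum bpB); last exact: Ble_Lam2.
  by apply: eq_bigr => X _; case: (ileave X) => _ [_ [_ ->]].
Qed.

Lemma interleaved_components :
  (forall X Y, X != Y -> roundtrips_vanish (AX X) (BX Y) e) ->
  (forall X Y, X != Y -> roundtrips_vanish (BX X) (AX Y) e) ->
  interleaved A B e -> forall X, interleaved (AX X) (BX X) e.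
Proof.
move=> vanishAB vanishBA [alpha [beta ileave]] X.
by exists (component bpA bpB e X X alpha), (component bpB bpA e X X beta);
  apply: is_interleaving_components.
Qed.

Lemma interleaved_of_components :
  (forall X, interleaved (AX X) (BX X) e) -> interleaved A B e.
Proof.
move=> ileave.
have [alpha ileave_alpha] := non_dep_dep_functional_choice choice _ _ ileave.
have [beta ileave_ab] := non_dep_dep_functional_choice choice _ _ ileave_alpha.
exists (assemble bpA bpB e alpha), (assemble bpB bpA e beta).
exact: is_interleaving_assemble.
Qed.

End ComponentInterleavings.

Lemma proj1_sig_inj {A : Type} {P : A -> Prop} : injective (@proj1_sig A P).
Proof. by case=> x px [y py] /= exy; apply: subset_eq_compat. Qed.

Section TypeParts.
Context {k : fieldType} {V : pmod k} {VX : itype -> pmod k}.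
Context {J : Type} {I : J -> Bpt -> Prop}.
Context {idx : forall b, 'I_(pdim V b) -> J} {Q : forall b, 'M[k]_(pdim V b)}.
Context {idxX : forall X b, 'I_(pdim (VX X) b) -> {j : J | of_type X (I j)}}.
Context {QX : forall X b, 'M[k]_(pdim (VX X) b)}.
Hypotheses (intI : forall j, is_interval (I j)) (bV : is_barcode_basis V I idx Q).
Hypothesis bVX :
  forall X, is_barcode_basis (VX X) (fun j => I (proj1_sig j)) (idxX X) (QX X).

Let idxX_val_inj X b : injective (fun i' => proj1_sig (idxX X b i')).
Proof. exact: inj_comp proj1_sig_inj (barcode_idx_inj (bVX X) b). Qed.

Let type_of_idxX X Y b i' j' :
  proj1_sig (idxX X b i') = proj1_sig (idxX Y b j') -> X = Y.
Proof.
move=> eq_val; apply: (of_type_unique (intI (proj1_sig (idxX X b i')))).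
  exact: proj2_sig (idxX X b i').
by rewrite eq_val; apply: proj2_sig (idxX Y b j').
Qed.

(* In barcode bases, the inclusion of [VX X] into [V] sends each bar of [VX X]
   to the same bar of [V]. *)
Definition part_mx X b : 'M[k]_(pdim (VX X) b, pdim V b) :=
  relmx (fun i' i => proj1_sig (idxX X b i') = idx b i).

Lemma part_mx_coisometry X b : part_mx X b *m (part_mx X b)^T = 1%:M.
Proof.
rewrite tr_relmx mul_relmx => [|i' m j j' e1 _ e3 _]; last first.
  by apply: (barcode_idx_inj bV b); rewrite -e1 -e3.
rewrite -relmx_eq; apply: eq_relmx => i' m; split => [[i [e1 e2]]|<-].
  by apply: (idxX_val_inj X b); rewrite /= e1 e2.
by have [i ei] := barcode_idxP bV (barcode_idx_mem (bVX X) b i'); exists i.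
Qed.

Lemma part_mx_orthogonal X Y b : X != Y -> part_mx X b *m (part_mx Y b)^T = 0.
Proof.
move=> /eqP neqXY; rewrite tr_relmx mul_relmx => [|i' m j j' e1 _ e3 _]; last first.
  by apply: (barcode_idx_inj bV b); rewrite -e1 -e3.
rewrite -relmx_False; apply: eq_relmx => i' m; split => // -[i [e1 e2]].
by apply: neqXY; apply: (type_of_idxX X Y b i' m); rewrite e1 e2.
Qed.

Lemma sum_part_mx b : \sum_X (part_mx X b)^T *m part_mx X b = 1%:M.
Proof.
have tr_part_mx X : (part_mx X b)^T *m part_mx X b = relmx (fun i i2 =>
    exists i', proj1_sig (idxX X b i') = idx b i /\ proj1_sig (idxX X b i') = idx b i2).
  rewrite tr_relmx mul_relmx // => i i2 j j' e1 _ e3 _.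
  by apply: (idxX_val_inj X b); rewrite /= e1 e3.
rewrite (eq_bigr _ (fun X _ => tr_part_mx X)) sum_relmx; last first.
  by move=> i i2 X Y [i' [e1 _]] [m [e2 _]]; apply: (type_of_idxX X Y b i' m); rewrite e1 e2.
rewrite -relmx_eq; apply: eq_relmx => i i2; split => [[X [i' [e1 e2]]]|<-].
  by apply: (barcode_idx_inj bV b); rewrite -e1 -e2.
have [X TX] := of_type_exists (intI (idx b i)).
have [i' ei'] := barcode_idxP (bVX X) (j := exist _ (idx b i) TX) (barcode_idx_mem bV b i).
by exists X, i'; rewrite ei'.
Qed.

Lemma part_mx_natural X b b' :
  barcode_mx (idxX X) b b' *m part_mx X b' = part_mx X b *m barcode_mx idx b b'.
Proof.
rewrite /barcode_mx mul_relmx => [|i' i2 m m' e1 _ e3 _]; last first.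
  by apply: (barcode_idx_inj (bVX X) b'); rewrite -e1 -e3.
rewrite mul_relmx => [|i' i2 j j' e1 _ e3 _]; last first.
  by apply: (barcode_idx_inj bV b); rewrite -e1 -e3.
apply: eq_relmx => i' i2; split => [[m [e1 e2]]|[i [e1 e2]]].
  have [i ei] := barcode_idxP bV (barcode_idx_mem (bVX X) b i').
  by exists i; rewrite ei e1 e2.
have mem_b' : I (proj1_sig (idxX X b i')) b' by rewrite e1 e2; exact: barcode_idx_mem bV b' i2.
have [m em] := barcode_idxP (bVX X) mem_b'.
by exists m; rewrite em e1 e2.
Qed.

Lemma part_mx_tr_natural X b b' :
  barcode_mx idx b b' *m (part_mx X b')^T = (part_mx X b)^T *m barcode_mx (idxX X) b b'.
Proof.
rewrite /barcode_mx tr_relmx mul_relmx => [|i i2 j j' e1 _ e3 _]; last first.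
  by apply: (barcode_idx_inj bV b'); rewrite -e1 -e3.
rewrite tr_relmx mul_relmx => [|i m i' j' e1 _ e3 _]; last first.
  by apply: (idxX_val_inj X b); rewrite /= e1 e3.
apply: eq_relmx => i m; split => [[i2 [e1 e2]]|[i' [e1 e2]]].
  have mem_b : I (proj1_sig (idxX X b' m)) b by rewrite e2 -e1; exact: barcode_idx_mem bV b i.
  have [i' ei'] := barcode_idxP (bVX X) mem_b.
  by exists i'; rewrite ei' e2 -e1.
have [i2 ei2] := barcode_idxP bV (barcode_idx_mem (bVX X) b' m).
by exists i2; rewrite ei2 -e2 e1.
Qed.

Definition part_inj X := of_bases (QX X) Q (part_mx X).
Definition part_proj X := of_bases Q (QX X) (fun b => (part_mx X b)^T).

Lemma part_inj_hom X : is_hom (part_inj X).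
Proof.
apply/(is_hom_in_bases (bVX X) bV) => b b' _.
by rewrite !(in_of_bases (bVX X) bV) part_mx_natural.
Qed.

Lemma part_proj_hom X : is_hom (part_proj X).
Proof.
apply/(is_hom_in_bases bV (bVX X)) => b b' _.
by rewrite !(in_of_bases bV (bVX X)) part_mx_tr_natural.
Qed.

Lemma part_inj_proj X Y b : part_inj X b *m part_proj Y b =
  invmx (QX X b) *m (part_mx X b *m (part_mx Y b)^T) *m QX Y b.
Proof. by rewrite /part_inj /part_proj /of_bases !mulmxA mulmxK ?(barcode_unitmx bV). Qed.

Lemma part_proj_inj X b : part_proj X b *m part_inj X b =
  invmx (Q b) *m ((part_mx X b)^T *m part_mx X b) *m Q b.
Proof. by rewrite /part_inj /part_proj /of_bases !mulmxA mulmxK ?(barcode_unitmx (bVX X)). Qed.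

Lemma part_injK X b : part_inj X b *m part_proj X b = 1%:M.
Proof.
by rewrite part_inj_proj part_mx_coisometry mulmx1 mulVmx ?(barcode_unitmx (bVX X)).
Qed.

Lemma part_inj_proj0 X Y b : X != Y -> part_inj X b *m part_proj Y b = 0.
Proof. by move=> neqXY; rewrite part_inj_proj part_mx_orthogonal // mulmx0 mul0mx. Qed.

Lemma sum_part_proj_inj b : \sum_X part_proj X b *m part_inj X b = 1%:M.
Proof.
rewrite (eq_bigr _ (fun X _ => part_proj_inj X b)) -mulmx_suml -mulmx_sumr.
by rewrite sum_part_mx mulmx1 mulVmx ?(barcode_unitmx bV).
Qed.

Definition parts_biproduct : biproduct V VX :=
  {| bp_inj_hom := part_inj_hom; bp_proj_hom := part_proj_hom;
     bp_injK := part_injK; bp_inj_proj0 := part_inj_proj0;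
     bp_sum := sum_part_proj_inj |}.

End TypeParts.

Lemma type_parts_pure {k : fieldType} {V : pmod k} {VX : itype -> pmod k} :
  type_parts V VX -> forall X, pure_of_type X (VX X).
Proof.
case=> J [I [_ partsX]] X.
exists {j : J | of_type X (I j)}, (fun j => I (proj1_sig j)).
by split=> [|j]; [exact: partsX | exact: proj2_sig j].
Qed.

Lemma type_parts_biproduct {k : fieldType} {V : pmod k} {VX : itype -> pmod k} :
  type_parts V VX -> inhabited (biproduct V VX).
Proof.
case=> J [I [[intI [idx [Q bV]]] partsX]].
have [idxX bases] := non_dep_dep_functional_choice choice _ _ (fun X => proj2 (partsX X)).
have [QX bVX] := non_dep_dep_functional_choice choice _ _ bases.
exact: inhabits (parts_biproduct intI bV bVX).
Qed.

Theorem proposition4p6 (k : fieldType) (V W : pmod k)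
    (VX WX : itype -> pmod k) (e : R) :
  type_parts V VX -> type_parts W WX -> Rle 0 e ->
  (interleaved V W e <-> forall X : itype, interleaved (VX X) (WX X) e).
Proof.
move=> partsV partsW e_ge0.
have [bpV] := type_parts_biproduct partsV; have [bpW] := type_parts_biproduct partsW.
have pureV := type_parts_pure partsV; have pureW := type_parts_pure partsW.
split; last exact: interleaved_of_components.
apply: interleaved_components => // X Y neqXY.
- exact: roundtrips_vanish_of_types neqXY (pureV X) (pureW Y).
- exact: roundtrips_vanish_of_types neqXY (pureW X) (pureV Y).
Qed.
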